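(* Let $\mathcal{D}=(\Omega,\mathcal{B})$ be a supersimple $2$-$(n,4,\lambda)$ design satisfying property $(\triangle)$, such that $(\Omega,\mathcal{C})$ is a regular two-graph where $\mathcal{C}$ is the set of collinear triples. Then for pairwise distinct $x,y,z\in\Omega$, $$[y,z]\cdot[x,y]\cdot[y,z]=\begin{cases}[x,y]&\text{if }x\in\overline{y,z},\\ [x,z]&\text{otherwise.}\end{cases}$$
   Context: A $2$-$(n,4,\lambda)$ design $(\Omega,\mathcal{B})$: $n$ points, a multiset of $4$-subsets (lines), every $2$-subset in exactly $\lambda$ lines; supersimple: distinct lines meet in at most two points. For distinct $a,b$ with lines $\{a,b,a_i,b_i\}$ through them, $[a,b]:=(a,b)\prod_i(a_i,b_i)\in\operatorname{Sym}(\Omega)$. Permutations act on the right, products composed left to right. For distinct $y,z$, $\overline{y,z}$ is the set of points $w$ such that some line contains $y,z,w$. Property $(\triangle)$: if $B_1,B_2\in\mathcal{B}$ with $|B_1\cap B_2|=2$ then $B_1\triangle B_2\in\mathcal{B}$. Regular two-graph: $(\Omega,\mathcal{C})$ is a $2$-$(n,3,\mu)$ design with every $4$-subset containing $0,2$ or $4$ members of $\mathcal{C}$. *)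

From mathcomp Require Import all_boot all_order all_fingroup.
Set Implicit Arguments. Unset Strict Implicit. Unset Printing Implicit Defensive.

Section Designs.
Variable T : finType.   (* the point set Omega, n = #|T| *)
Implicit Types (Bs : seq {set T}) (a b x y z w : T).

(* The multiset of lines is a sequence of subsets; a 2-(n,4,lam) design:
   every line has 4 points, every 2-subset lies in exactly lam lines
   (counted with multiplicity). *)
Definition design_2_4 Bs (lam : nat) : Prop :=
  all (fun B : {set T} => #|B| == 4) Bs /\
  forall P : {set T}, #|P| = 2 -> count (fun B : {set T} => P \subset B) Bs = lam.

(* Supersimple: distinct lines (distinct members of the multiset, i.e.
   distinct positions) meet in at most two points. *)
Definition supersimple Bs : Prop :=
  forall i j, i < size Bs -> j < size Bs -> i != j ->
    #|nth set0 Bs i :&: nth set0 Bs j| <= 2.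

Definition prop_triangle Bs : Prop :=
  forall B1 B2, B1 \in Bs -> B2 \in Bs -> #|B1 :&: B2| = 2 ->
    (B1 :\: B2) :|: (B2 :\: B1) \in Bs.

Definition collinear_triples Bs : {set {set T}} :=
  [set S : {set T} | (#|S| == 3) && has (fun B : {set T} => S \subset B) Bs].

Definition regular_two_graph (C : {set {set T}}) : Prop :=
  (forall S, S \in C -> #|S| = 3) /\
  (exists mu : nat, forall P : {set T}, #|P| = 2 ->
       #|[set S in C | P \subset S]| = mu) /\
  (forall Q : {set T}, #|Q| = 4 ->
       #|[set S in C | S \subset Q]| \in [:: 0; 2; 4]).

Definition span2 Bs y z : {set T} :=
  [set w | has (fun B : {set T} => [&& y \in B, z \in B & w \in B]) Bs].

(* For a line B through a and b, the transposition of the two remaining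
   points {a_i, b_i} = B \ {a, b}. *)
Definition other_tperm a b (B : {set T}) : {perm T} :=
  let e := enum (B :\ a :\ b) in tperm (nth a e 0) (nth a e 1).

(* [a,b] := (a,b) * prod_i (a_i,b_i); products in {perm T} compose left to
   right (s * t first applies s), matching permutations acting on the right. *)
Definition brk Bs a b : {perm T} :=
  (tperm a b * \prod_(B <- Bs | (a \in B) && (b \in B)) other_tperm a b B)%g.

End Designs.

From mathcomp Require Import all_boot all_order all_fingroup.
From mathcomp Require Import zify.

(* [a,b] is the involution whose 2-cycles are {a,b} and the pairs {p,q}
   completing a line {a,b,p,q}; supersimplicity makes these transpositions
   disjoint.  Hence sigma := [y,z] conjugates [x,y] to [x,y], resp. [x,z], as
   soon as sigma maps the 2-cycles of one bracket onto those of the other.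
   This is checked on each line through x by repeatedly replacing two lines
   meeting in two points by their symmetric difference (property (triangle)),
   while the two-graph condition, read as "every four points carry an even
   number of collinear triples", decides which of the points produced lie on
   a line through y and z. *)

Set Implicit Arguments. Unset Strict Implicit. Unset Printing Implicit Defensive.

Lemma uniq4E (T : eqType) (a b c d : T) : uniq [:: a; b; c; d] =
  [&& a != b, a != c, a != d, b != c, b != d & c != d].
Proof. by rewrite /= !inE !negb_or !andbT -!andbA. Qed.

Lemma uniq4C (T : eqType) (a b c d : T) : uniq [:: a; b; c; d] = uniq [:: a; b; d; c].
Proof. by apply: perm_uniq; rewrite (perm_cons a) (perm_cons b) (perm_catC [:: c] [:: d]). Qed.

Section FiniteFacts.
Variable T : finType.
Implicit Types (A B : {set T}) (s : seq T) (p q t u v : T).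

Lemma mem_subset_card s B t : uniq s -> size s = #|B| -> {subset s <= B} ->
  t \in B -> t \in s.
Proof.
move=> us sB sub; have /subset_cardP: #|s| = #|B| by rewrite (card_uniqP us).
by move=> /(_ (introT subsetP sub)) ->.
Qed.

Lemma tperm_card2 A u v p q : #|A| = 2 -> u \in A -> v \in A -> u != v ->
  p \in A -> q \in A -> p != q -> tperm u v p = q.
Proof.
move=> cA uA vA uv pA qA pq.
have memA t : t \in A -> (t == u) || (t == v).
  move=> tA; have := @mem_subset_card [:: u; v] A t; rewrite !inE; apply=> //.
  - by rewrite /= inE uv.
  - by move=> w; rewrite !inE => /orP[]/eqP->.
by move: pq; case/orP: (memA p pA) => /eqP->; case/orP: (memA q qA) => /eqP->;
  rewrite ?eqxx ?tpermL ?tpermR.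
Qed.

Lemma prod_perm_on_disjoint (I : eqType) (r : seq I) (S : I -> {set T})
    (f : I -> {perm T}) :
  (forall i, i \in r -> perm_on (S i) (f i)) ->
  pairwise (fun i j => [disjoint S i & S j]) r ->
  (forall p, (forall i, i \in r -> p \notin S i) -> (\prod_(i <- r) f i)%g p = p) /\
  (forall i p, i \in r -> p \in S i -> (\prod_(i <- r) f i)%g p = f i p).
Proof.
elim: r => [|j r IH] fS; first by rewrite big_nil; split=> // p _; rewrite perm1.
have fSr i : i \in r -> perm_on (S i) (f i) by move=> ir; apply: fS; rewrite inE ir orbT.
rewrite pairwise_cons => /andP[/allP disj_j /(IH fSr)].
have fSj := fS j (mem_head j r).
case=> fix_r move_r; rewrite big_cons; split=> [p pS|i p].
  rewrite permM (out_perm fSj) ?pS ?mem_head // fix_r // => i ir.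
  by rewrite pS // inE ir orbT.
rewrite inE permM => /predU1P[->|ir] pSi.
  rewrite fix_r // => k kr; rewrite -(perm_closed _ fSj) in pSi.
  by rewrite (disjointFr (disj_j k kr)).
by rewrite (out_perm fSj) ?(move_r i) // (disjointFl (disj_j i ir) pSi).
Qed.

Lemma card_ge3 A u v w : uniq [:: u; v; w] ->
  u \in A -> v \in A -> w \in A -> 3 <= #|A|.
Proof.
move=> uvw uA vA wA; have <- : #|[:: u; v; w]| = 3 by rewrite (card_uniqP uvw).
by apply/subset_leq_card/subsetP => t; rewrite !inE => /or3P[]/eqP->.
Qed.

Lemma setD1_of_subset A B : A \subset B -> #|B| = #|A|.+1 ->
  exists2 t, t \in B & A = B :\ t.
Proof.
move=> AB cB; have /set0Pn[t /setDP[tB tA]] : B :\: A != set0.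
  by rewrite -card_gt0 cardsD (setIidPr AB) cB subSnn.
exists t => //; apply/eqP; rewrite eqEcard; apply/andP; split.
  by apply/subsetP => u uA; rewrite in_setD1 (subsetP AB) // andbT; apply: contraNneq tA => <-.
by have := cardsD1 t B; rewrite tB cB; lia.
Qed.

Lemma card_triples_sub4 (C : {set {set T}}) B : (forall A, A \in C -> #|A| = 3) ->
  #|B| = 4 -> #|[set A in C | A \subset B]| = #|[set t in B | B :\ t \in C]|.
Proof.
move=> C3 cB; rewrite -(@card_in_imset _ _ (fun t => B :\ t)); last first.
  move=> t u; rewrite !inE => /andP[tB _] /andP[uB _] eq_tu; apply/eqP/contraT => tu.
  by have := in_setD1 u B t; rewrite eq_tu !inE eqxx eq_sym tu uB.
apply: eq_card => A; rewrite inE; apply/andP/imsetP => [[AC AB]|[t]].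
  have [|t tB eA] := setD1_of_subset AB; first by rewrite cB C3.
  by exists t; rewrite // inE tB -eA.
by rewrite inE => /andP[tB tC] ->; rewrite subD1set.
Qed.

Lemma setD1_rem s t : uniq s -> [set u in s] :\ t =i rem t s.
Proof. by move=> us u; rewrite in_setD1 inE mem_rem_uniq // inE. Qed.

Lemma card_set_count s (P : pred T) : uniq s -> #|[set t in [set u in s] | P t]| = count P s.
Proof.
move=> us; rewrite -size_filter -(card_uniqP (filter_uniq P us)) -cardsE.
by apply: eq_card => t; rewrite !inE mem_filter andbC.
Qed.

Lemma conj_involution (s t r : {perm T}) : involutive s ->
  (forall p, r p != p -> t (s p) = s (r p)) ->
  (forall p, t p != p -> r (s p) = s (t p)) -> (s * t * s)%g = r.
Proof.
move=> sK rt tr; apply/permP => p; rewrite !permM.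
have [rp|/rt->] := eqVneq (r p) p; last by rewrite sK.
have [tsp|/tr] := eqVneq (t (s p)) (s p); first by rewrite tsp sK rp.
by rewrite sK rp => <-.
Qed.

End FiniteFacts.

Section Lines.
Variables (T : finType) (Bs : seq {set T}).
Hypothesis Bs_supersimple : supersimple Bs.
Implicit Types (B C : {set T}) (t u v w : T).

Lemma lines_meet_pairwise : pairwise (fun B C => #|B :&: C| <= 2) Bs.
Proof.
apply/(pairwiseP set0) => i j; rewrite !inE => ilt jlt ij.
by apply: Bs_supersimple; rewrite // ltn_eqF.
Qed.

Lemma lines_meet_le2 B C : B \in Bs -> C \in Bs -> B != C -> #|B :&: C| <= 2.
Proof.
move=> BBs CBs; rewrite -(nth_index set0 BBs) -(nth_index set0 CBs) => BC.
by apply: Bs_supersimple; rewrite ?index_mem //; apply: contraNneq BC => ->.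
Qed.

Lemma line_eq3 B C u v w : B \in Bs -> C \in Bs -> uniq [:: u; v; w] ->
  u \in B -> v \in B -> w \in B -> u \in C -> v \in C -> w \in C -> B = C.
Proof.
move=> BBs CBs uvw uB vB wB uC vC wC; apply/eqP/negPn/negP => /(lines_meet_le2 BBs CBs).
by rewrite leqNgt (card_ge3 uvw) // inE ?uB ?vB ?wB.
Qed.

Hypothesis Bs_triangle : prop_triangle Bs.

Lemma line_symdiff B C u v t : B \in Bs -> C \in Bs -> u != v ->
  u \in B -> v \in B -> u \in C -> v \in C -> t \in B -> t \notin C ->
  (B :\: C) :|: (C :\: B) \in Bs.
Proof.
move=> BBs CBs uv uB vB uC vC tB tC; apply: Bs_triangle => //; apply/eqP.
rewrite eqn_leq lines_meet_le2 //=; last by apply: contraNneq tC => <-.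
have <- : #|[set u; v]| = 2 by rewrite cards2 uv.
apply/subset_leq_card/subsetP => w /set2P[]->;
  by rewrite inE ?uB ?uC ?vB ?vC.
Qed.

End Lines.

Section Bracket.
Variables (T : finType) (Bs : seq {set T}).
Hypothesis line_card : forall B, B \in Bs -> #|B| = 4.
Hypothesis Bs_supersimple : supersimple Bs.
Implicit Types (B : {set T}) (a b p q : T).

(* The 2-cycles of [brk Bs a b], by brk_partner and brk_fixed. *)
Definition partners a b p q : bool :=
  [|| (p == a) && (q == b), (p == b) && (q == a)
    | uniq [:: a; b; p; q] && has (fun B => [&& a \in B, b \in B, p \in B & q \in B]) Bs].

Definition collinear p q r : bool :=
  has (fun B => [&& p \in B, q \in B & r \in B]) Bs.

Lemma collinearI B p q r : B \in Bs -> p \in B -> q \in B -> r \in B -> collinear p q r.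
Proof. by move=> BBs pB qB rB; apply/hasP; exists B; rewrite ?pB ?qB ?rB. Qed.

Lemma collinearC p q r : collinear p q r = collinear q p r.
Proof. by apply: eq_has => B; rewrite andbCA. Qed.

Lemma collinear_rot p q r : collinear p q r = collinear q r p.
Proof. by apply: eq_has => B; rewrite andbCA (andbC (p \in B)). Qed.

Lemma partners_line B a b p q : B \in Bs -> uniq [:: a; b; p; q] ->
  a \in B -> b \in B -> p \in B -> q \in B -> partners a b p q.
Proof.
by move=> BBs abpq aB bB pB qB; rewrite /partners abpq; apply/or3P/Or33/hasP; exists B;
  rewrite ?aB ?bB ?pB.
Qed.

Lemma partnersC a b p q : partners a b p q = partners b a p q.
Proof.
suff imp c d : partners c d p q -> partners d c p q by apply/idP/idP; apply: imp.
case/or3P=> [/andP[/eqP-> /eqP->]|/andP[/eqP-> /eqP->]|]; rewrite /partners ?eqxx ?orbT //.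
case/andP=> u /hasP[B BBs /and4P[cB dB pB qB]]; apply: (partners_line BBs) => //.
by move: u; rewrite !uniq4E eq_sym => /and5P[-> -> -> -> /andP[-> ->]].
Qed.

Lemma partners_sym a b p q : partners a b p q = partners a b q p.
Proof.
suff imp r s : partners a b r s -> partners a b s r by apply/idP/idP; apply: imp.
case/or3P=> [/andP[/eqP-> /eqP->]|/andP[/eqP-> /eqP->]|]; rewrite /partners ?eqxx ?orbT //.
case/andP=> u /hasP[B BBs /and4P[aB bB rB sB]]; apply: (partners_line BBs) => //.
by move: u; rewrite !uniq4E (eq_sym r s) => /and5P[-> -> -> -> /andP[-> ->]].
Qed.

Section TwoPoints.
Variables a b : T.
Hypothesis ab : a != b.

Lemma card_setD2 B : B \in Bs -> a \in B -> b \in B -> #|B :\ a :\ b| = 2.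
Proof.
move=> BBs aB bB; have := cardsD1 b (B :\ a); have := cardsD1 a B.
rewrite !inE eq_sym ab aB bB line_card //=; lia.
Qed.

Lemma other_tperm_spec B : B \in Bs -> a \in B -> b \in B ->
  exists u v, [/\ u \in B :\ a :\ b, v \in B :\ a :\ b, u != v &
                  other_tperm a b B = tperm u v].
Proof.
move=> BBs aB bB; rewrite /other_tperm; set e := enum _.
have size_e : size e = 2 by rewrite -cardE card_setD2.
have inS i : i < 2 -> nth a e i \in B :\ a :\ b.
  by move=> lti; rewrite -mem_enum mem_nth ?size_e.
by exists (nth a e 0), (nth a e 1); rewrite !inS // nth_uniq ?size_e ?enum_uniq.
Qed.

Lemma other_tperm_on B : B \in Bs -> a \in B -> b \in B ->
  perm_on (B :\ a :\ b) (other_tperm a b B).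
Proof.
move=> BBs aB bB; have [u [v [uS vS _ ->]]] := other_tperm_spec BBs aB bB.
by apply: subset_trans (tperm_on u v) _; apply/subsetP => t /set2P[]->.
Qed.

Lemma other_tpermE B p q : B \in Bs -> a \in B -> b \in B ->
  p \in B :\ a :\ b -> q \in B :\ a :\ b -> p != q -> other_tperm a b B p = q.
Proof.
move=> BBs aB bB pS qS pq; have [u [v [uS vS uv ->]]] := other_tperm_spec BBs aB bB.
exact: (tperm_card2 (card_setD2 BBs aB bB)).
Qed.

Lemma other_tperm_supports_disjoint :
  pairwise (fun B C : {set T} => [disjoint B :\ a :\ b & C :\ a :\ b])
           [seq B : {set T} <- Bs | (a \in B) && (b \in B)].
Proof.
apply: (sub_in_pairwise (P := [pred B : {set T} | (a \in B) && (b \in B)])); last first.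
- exact/pairwise_filter/lines_meet_pairwise.
- by apply/allP => B; rewrite mem_filter => /andP[].
move=> B C /andP[aB bB] /andP[aC bC] meet2; rewrite disjoint_subset.
apply/subsetP => p; rewrite !inE => /and3P[pb pa pB]; apply/negP => /and3P[_ _ pC].
have abp : uniq [:: a; b; p] by rewrite /= !inE !negb_or ab !(eq_sym _ p) pa pb.
by move: meet2; rewrite leqNgt (card_ge3 abp) // inE ?aB ?aC ?bB ?bC ?pB ?pC.
Qed.

Local Notation prod_other := (\prod_(B <- Bs | (a \in B) && (b \in B)) other_tperm a b B)%g.

Lemma prod_other_spec :
  (forall p, (forall B, B \in Bs -> a \in B -> b \in B -> p \notin B :\ a :\ b) ->
     prod_other p = p) /\
  (forall B p q, B \in Bs -> a \in B -> b \in B ->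
     p \in B :\ a :\ b -> q \in B :\ a :\ b -> p != q -> prod_other p = q).
Proof.
rewrite -big_filter.
have [] := @prod_perm_on_disjoint _ _ _ (fun B => B :\ a :\ b) (other_tperm a b) _
  other_tperm_supports_disjoint.
- by move=> B; rewrite mem_filter => /andP[/andP[aB bB] BBs]; apply: other_tperm_on.
move=> prod_fix prod_move; split=> [p pS|B p q BBs aB bB pS qS pq].
  by apply: prod_fix => B; rewrite mem_filter => /andP[/andP[aB bB] BBs]; apply: pS.
by rewrite (prod_move B) ?mem_filter ?aB ?bB // (other_tpermE BBs aB bB pS qS).
Qed.

Lemma line_other_point B p : B \in Bs -> a \in B -> b \in B -> p \in B ->
  p != a -> p != b -> exists2 q, q \in B & uniq [:: a; b; p; q].
Proof.
move=> BBs aB bB pB pa pb; have /set0Pn[q] : B :\ a :\ b :\ p != set0.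
  rewrite -card_gt0; have := cardsD1 p (B :\ a :\ b).
  by rewrite !inE pa pb pB card_setD2 //; lia.
rewrite !inE => /and4P[qp qb qa qB]; exists q => //.
by rewrite uniq4E ab !(eq_sym _ p) !(eq_sym _ q) pa pb qa qb qp.
Qed.

Lemma brk_partner p q : partners a b p q -> brk Bs a b p = q.
Proof.
have [prod_fix prod_move] := prod_other_spec; rewrite /brk permM.
case/or3P=> [/andP[/eqP-> /eqP->]|/andP[/eqP-> /eqP->]|].
- by rewrite tpermL prod_fix // => B _ _ _; rewrite !inE eqxx.
- by rewrite tpermR prod_fix // => B _ _ _; rewrite !inE eqxx andbF.
case/andP; rewrite uniq4E => /and5P[_ ap aq bp /andP[bq pq]] /hasP[B BBs /and4P[aB bB pB qB]].
rewrite tpermD 1?(eq_sym p) //; apply: (prod_move B p q BBs aB bB _ _ pq);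
  by rewrite !inE ?pB ?qB ?(eq_sym p) ?(eq_sym q) ?ap ?bp ?aq ?bq.
Qed.

Lemma brk_fixed p : (forall q, ~~ partners a b p q) -> brk Bs a b p = p.
Proof.
move=> nopart; have [prod_fix _] := prod_other_spec; rewrite /brk permM.
have pa : p != a by apply: contraNneq (nopart b) => ->; rewrite /partners !eqxx.
have pb : p != b by apply: contraNneq (nopart a) => ->; rewrite /partners !eqxx orbT.
rewrite tpermD 1?eq_sym // prod_fix // => B BBs aB bB; rewrite !inE pa pb /=.
apply/negP => pB; have [q qB abpq] := line_other_point BBs aB bB pB pa pb.
by move/negP: (nopart q); apply; apply: (partners_line BBs).
Qed.

Lemma brk_moved p : brk Bs a b p != p -> partners a b p (brk Bs a b p).
Proof.
move=> moved; have [/existsP[q pq]|/existsPn nopart] := boolP [exists q, partners a b p q].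
  by rewrite (brk_partner pq).
by rewrite brk_fixed ?eqxx in moved.
Qed.

Lemma brkK : involutive (brk Bs a b).
Proof.
move=> p; have [fixed|moved] := eqVneq (brk Bs a b p) p; first by rewrite !fixed.
by apply: brk_partner; rewrite partners_sym brk_moved.
Qed.

Lemma brk_l : brk Bs a b a = b.
Proof. by apply: brk_partner; rewrite /partners !eqxx. Qed.

Lemma brk_r : brk Bs a b b = a.
Proof. by apply: brk_partner; rewrite /partners !eqxx orbT. Qed.

Lemma brk_collinear p : p != a -> p != b -> collinear a b p ->
  exists2 B, B \in Bs &
    [&& a \in B, b \in B, p \in B, brk Bs a b p \in B & uniq [:: a; b; p; brk Bs a b p]].
Proof.
move=> pa pb /hasP[B BBs /and3P[aB bB pB]].
have [q qB abpq] := line_other_point BBs aB bB pB pa pb.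
by exists B; rewrite // (brk_partner (partners_line BBs abpq aB bB pB qB)) aB bB pB qB.
Qed.

Lemma brk_notcollinear p : p != a -> p != b -> ~~ collinear a b p -> brk Bs a b p = p.
Proof.
move=> pa pb ncol; apply: brk_fixed => q; apply: contraNN ncol.
case/or3P=> [/andP[/eqP pa' _]|/andP[/eqP pb' _]|/andP[_ /hasP[B BBs /and4P[aB bB pB _]]]].
- by rewrite pa' eqxx in pa.
- by rewrite pb' eqxx in pb.
- exact: collinearI BBs aB bB pB.
Qed.

Lemma brk_stable B p : B \in Bs -> a \in B -> b \in B -> p \in B -> brk Bs a b p \in B.
Proof.
move=> BBs aB bB pB; have [->|pa] := eqVneq p a; first by rewrite brk_l.
have [->|pb] := eqVneq p b; first by rewrite brk_r.
have [C CBs /and5P[aC bC pC sC _]] := brk_collinear pa pb (collinearI BBs aB bB pB).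
have abp : uniq [:: a; b; p] by rewrite /= !inE negb_or ab !(eq_sym _ p) pa pb.
by rewrite (line_eq3 Bs_supersimple BBs CBs abp aB bB pB aC bC pC).
Qed.

End TwoPoints.

Lemma brkC a b : a != b -> brk Bs a b = brk Bs b a.
Proof.
move=> ab; have ba : b != a by rewrite eq_sym.
apply/permP => p; have key c d : c != d -> brk Bs c d p != p -> brk Bs d c p = brk Bs c d p.
  by move=> cd /(brk_moved cd); rewrite partnersC; apply: brk_partner; rewrite eq_sym.
have [abp|/(key _ _ ab) -> //] := eqVneq (brk Bs a b p) p.
have [bap|/(key _ _ ba) -> //] := eqVneq (brk Bs b a p) p.
by rewrite abp bap.
Qed.

Lemma brk_conj (s : {perm T}) a b c d : involutive s -> a != b -> c != d ->
  (forall p q, partners a b p q -> partners c d (s p) (s q)) ->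
  (forall p q, partners c d p q -> partners a b (s p) (s q)) ->
  (s * brk Bs c d * s)%g = brk Bs a b.
Proof.
move=> sK ab cd abcd cdab; apply: conj_involution => // p.
  by move/(brk_moved ab)/abcd/(brk_partner cd).
by move/(brk_moved cd)/cdab/(brk_partner ab).
Qed.

End Bracket.

Section Parity.
Variables (T : finType) (Bs : seq {set T}).
Hypothesis Bs_two_graph : regular_two_graph (collinear_triples Bs).

Lemma collinear_triplesE (S : {set T}) (p q r : T) : S =i [:: p; q; r] -> uniq [:: p; q; r] ->
  (S \in collinear_triples Bs) = collinear Bs p q r.
Proof.
move=> eS pqr; rewrite inE (eq_card eS) (card_uniqP pqr) /=; apply: eq_has => B.
apply/subsetP/and3P => [SB|[pB qB rB] t]; last by rewrite eS !inE => /or3P[]/eqP->.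
by split; apply: SB; rewrite eS !inE eqxx ?orbT.
Qed.

Lemma collinear_parity a b c d : uniq [:: a; b; c; d] ->
  collinear Bs b c d = collinear Bs a c d (+) collinear Bs a b d (+) collinear Bs a b c.
Proof.
move=> abcd; have := abcd; rewrite uniq4E => /and5P[ab ac ad bc /andP[bd cd]].
set s := [:: a; b; c; d]; set Q := [set t in s].
have [C3 [_ even]] := Bs_two_graph.
have cQ : #|Q| = 4 by rewrite cardsE (card_uniqP abcd).
have col x p q r : rem x s = [:: p; q; r] ->
    (Q :\ x \in collinear_triples Bs) = collinear Bs p q r.
  move=> remx; apply: collinear_triplesE; last by rewrite -remx rem_uniq.
  by move=> t; rewrite setD1_rem // remx.
move: (even Q cQ); rewrite card_triples_sub4 // card_set_count //=.
rewrite (col a b c d) ?(col b a c d) ?(col c a b d) ?(col d a b c) /= ?eqxx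
  ?(negbTE ab) ?(negbTE ac) ?(negbTE ad) ?(negbTE bc) ?(negbTE bd) ?(negbTE cd) //.
by case: (collinear Bs a b c); case: (collinear Bs a b d);
  case: (collinear Bs a c d); case: (collinear Bs b c d).
Qed.

End Parity.

Section Conjugation.
Variables (T : finType) (Bs : seq {set T}).
Hypothesis line_card : forall B, B \in Bs -> #|B| = 4.
Hypothesis Bs_supersimple : supersimple Bs.
Hypothesis Bs_triangle : prop_triangle Bs.
Hypothesis Bs_two_graph : regular_two_graph (collinear_triples Bs).
Variables x y z : T.
Hypotheses (xy : x != y) (yz : y != z) (xz : x != z).
Local Notation sigma := (brk Bs y z).
Local Notation line_eq3 := (line_eq3 Bs_supersimple).
Local Notation line_symdiff := (line_symdiff Bs_supersimple Bs_triangle).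
Local Notation collinear := (collinear Bs).
Local Notation partners := (partners Bs).
Local Notation brk_collinear := (brk_collinear line_card Bs_supersimple yz).
Local Notation brk_notcollinear := (brk_notcollinear line_card Bs_supersimple yz).
Local Notation brk_r := (brk_r line_card Bs_supersimple yz).
Local Notation brk_stable := (brk_stable line_card Bs_supersimple yz).
Local Notation brkK := (brkK line_card Bs_supersimple yz).
Local Notation brk_l := (brk_l line_card Bs_supersimple yz).
Local Notation brk_partner := (brk_partner line_card Bs_supersimple yz).

Section OffSpan.
Hypothesis x_off : ~~ collinear y z x.

(* Parity puts p on a line D through x and y; if q were off D, the line
   D :\: C :|: C :\: D would join y, z and q. *)
Lemma partners_off_fixed C p q : C \in Bs -> uniq [:: x; z; p; q] ->
  x \in C -> z \in C -> p \in C -> q \in C -> y \notin C ->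
  ~~ collinear y z p -> ~~ collinear y z q -> partners x y p q.
Proof.
move=> CBs xzpq xC zC pC qC yC yzp yzq.
move: (xzpq); rewrite uniq4E => /and5P[_ xp xq zp /andP[zq pq]].
have [yp yq] : y != p /\ y != q by split; apply: contraNneq yC => ->.
have : collinear x y p.
  have /(collinear_parity Bs_two_graph) : uniq [:: x; y; z; p].
    by rewrite uniq4E xy xz xp yz yp zp.
  rewrite (negbTE yzp) (collinearI CBs xC zC pC) (collinear_rot _ x y z) (negbTE x_off).
  by case: (collinear x y p).
case/hasP=> D DBs /and3P[xD yD pD].
have zD : z \notin D by apply: contra x_off => zD; apply: collinearI DBs yD zD xD.
have [qD|qD] := boolP (q \in D).
  by apply: (partners_line DBs) => //; rewrite uniq4E xy xp xq yp yq pq.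
have EBs := line_symdiff DBs CBs xp xD pD xC pC yD yC.
by move: yzq; rewrite (collinearI EBs (p := y) (q := z) (r := q)) // !inE ?yD ?yC ?zC ?zD ?qC ?qD.
Qed.

(* With B' = {y,z,p,sigma p}, the lines C = {x,z,p,q} and B' meet in {z,p}, so
   {x,q,y,sigma p} is a line; parity then shows that sigma fixes q. *)
Lemma partners_off_moved C p q : C \in Bs -> uniq [:: x; z; p; q] ->
  x \in C -> z \in C -> p \in C -> q \in C -> y \notin C ->
  collinear y z p -> partners x y (sigma p) (sigma q).
Proof.
move=> CBs xzpq xC zC pC qC yC yzp.
move: (xzpq); rewrite uniq4E => /and5P[_ xp xq zp /andP[zq pq]].
have [py qy] : p != y /\ q != y by split; apply: contraNneq yC => <-.
have [pz qz] : p != z /\ q != z by rewrite !(eq_sym _ z).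
have [B' B'Bs /and5P[yB' zB' pB' sB' yzps]] := brk_collinear py pz yzp.
move: yzps; rewrite uniq4E => /and5P[_ _ ys _ /andP[zs ps]].
have xB' : x \notin B' by apply: contra x_off => xB'; apply: collinearI B'Bs yB' zB' xB'.
have qB' : q \notin B'.
  apply: contra yC => qB'; have zpq : uniq [:: z; p; q] by rewrite /= !inE !negb_or zp zq pq.
  by rewrite (line_eq3 CBs B'Bs zpq zC pC qC zB' pB' qB').
have sC : sigma p \notin C.
  apply: contra yC => sC; have zps : uniq [:: z; p; sigma p] by rewrite /= !inE !negb_or zp zs ps.
  by rewrite (line_eq3 CBs B'Bs zps zC pC sC zB' pB' sB').
have EBs := line_symdiff CBs B'Bs zp zC pC zB' pB' xC xB'.
have yzq : ~~ collinear y z q.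
  have /(collinear_parity Bs_two_graph) : uniq [:: x; y; z; q].
    by rewrite uniq4E xy xz xq yz zq eq_sym qy.
  rewrite (collinearI CBs xC zC qC) (collinear_rot _ x y z) (negbTE x_off).
  by rewrite (@collinearI _ _ _ x y q EBs) ?inE ?xC ?xB' ?yB' ?yC ?qC ?qB' //= => ->.
rewrite (brk_notcollinear qy qz yzq).
apply: (partners_line EBs); rewrite ?inE ?xC ?xB' ?yB' ?yC ?sB' ?sC ?qC ?qB' //.
have xs : x != sigma p by apply: contraNneq xB' => ->.
have sq : sigma p != q by apply: contraNneq qB' => <-.
by rewrite uniq4E xy xs xq ys (eq_sym y) qy sq.
Qed.

Lemma partners_off p q : partners x z p q -> partners x y (sigma p) (sigma q).
Proof.
have sx : sigma x = x by rewrite brk_notcollinear.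
case/or3P=> [/andP[/eqP-> /eqP->]|/andP[/eqP-> /eqP->]|].
- by rewrite sx brk_r /partners !eqxx.
- by rewrite sx brk_r /partners !eqxx orbT.
case/andP=> xzpq /hasP[C CBs /and4P[xC zC pC qC]].
have yC : y \notin C by apply: contra x_off => yC; apply: collinearI CBs yC zC xC.
have [yzp|yzp] := boolP (collinear y z p); first exact: (partners_off_moved CBs).
have [yzq|yzq] := boolP (collinear y z q).
  by rewrite partners_sym; apply: (partners_off_moved CBs); rewrite // -uniq4C.
move: (xzpq); rewrite uniq4E => /and5P[_ _ _ zp /andP[zq _]].
have [py qy] : p != y /\ q != y by split; apply: contraNneq yC => <-.
have [pz qz] : p != z /\ q != z by rewrite !(eq_sym _ z).
by rewrite !brk_notcollinear //; apply: (partners_off_fixed CBs).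
Qed.

End OffSpan.

Section OnSpan.
Hypothesis x_on : collinear y z x.

Lemma on_span_symdiff B p q : B \in Bs -> uniq [:: x; y; p; q] ->
  x \in B -> y \in B -> p \in B -> q \in B -> z \notin B -> collinear y z p ->
  exists2 E, E \in Bs &
    [&& x \in E, q \in E, z \in E, sigma p \in E, y \notin E & sigma p \notin B].
Proof.
move=> BBs xypq xB yB pB qB zB yzp.
move: (xypq); rewrite uniq4E => /and5P[_ xp xq yp /andP[yq pq]].
have py : p != y by rewrite eq_sym.
have pz : p != z by apply: contraNneq zB => <-.
have [B' B'Bs /and5P[yB' zB' pB' sB' yzps]] := brk_collinear py pz yzp.
move: yzps; rewrite uniq4E => /and5P[_ _ ys _ /andP[_ ps]].
have xB' : x \notin B'.
  apply: contra zB => xB'; have xyp : uniq [:: x; y; p] by rewrite /= !inE !negb_or xy xp yp.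
  by rewrite (line_eq3 BBs B'Bs xyp xB yB pB xB' yB' pB').
have qB' : q \notin B'.
  apply: contra zB => qB'; have ypq : uniq [:: y; p; q] by rewrite /= !inE !negb_or yp yq pq.
  by rewrite (line_eq3 BBs B'Bs ypq yB pB qB yB' pB' qB').
have sB : sigma p \notin B.
  apply: contra zB => sB; have yps : uniq [:: y; p; sigma p] by rewrite /= !inE !negb_or yp ys ps.
  by rewrite (line_eq3 BBs B'Bs yps yB pB sB yB' pB' sB').
exists ((B :\: B') :|: (B' :\: B)); first exact: line_symdiff BBs B'Bs yp yB pB yB' pB' xB xB'.
by rewrite !inE xB xB' qB qB' zB zB' sB sB' yB yB'.
Qed.

(* B = {x,y,p,q} and {y,z,p,sigma p} give the line E = {x,q,z,sigma p}; parity
   puts q on a line {y,z,q,sigma q}, which meets E in {z,q} and so yields the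
   line {x,y,sigma p,sigma q}. *)
Lemma partners_on_moved B p q : B \in Bs -> uniq [:: x; y; p; q] ->
  x \in B -> y \in B -> p \in B -> q \in B -> z \notin B -> collinear y z p ->
  partners x y (sigma p) (sigma q).
Proof.
move=> BBs xypq xB yB pB qB zB yzp.
have [E EBs /and5P[xE qE zE sE /andP[yE sB]]] := on_span_symdiff BBs xypq xB yB pB qB zB yzp.
move: (xypq); rewrite uniq4E => /and5P[_ xp xq yp /andP[yq pq]].
have qy : q != y by rewrite eq_sym.
have qz : q != z by apply: contraNneq zB => <-.
have yzq : collinear y z q.
  have /(collinear_parity Bs_two_graph) : uniq [:: x; y; z; q].
    by rewrite uniq4E xy xz xq yz yq eq_sym qz.
  by rewrite (collinearI EBs xE zE qE) (collinearI BBs xB yB qB) (collinear_rot _ x y z) x_on.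
have [B'' B''Bs /and5P[yB'' zB'' qB'' sqB'' yzqs]] := brk_collinear qy qz yzq.
move: yzqs; rewrite uniq4E => /and5P[_ _ ysq _ /andP[zsq qsq]].
have xB'' : x \notin B''.
  apply: contra zB => xB''; have xyq : uniq [:: x; y; q] by rewrite /= !inE !negb_or xy xq yq.
  by rewrite (line_eq3 BBs B''Bs xyq xB yB qB xB'' yB'' qB'').
have sB'' : sigma p \notin B''.
  apply: contra zB => /(brk_stable B''Bs yB'' zB''); rewrite brkK => pB''.
  have ypq : uniq [:: y; p; q] by rewrite /= !inE !negb_or yp yq pq.
  by rewrite (line_eq3 BBs B''Bs ypq yB pB qB yB'' pB'' qB'').
have sqE : sigma q \notin E.
  apply: contra xB'' => sqE.
  have zqs : uniq [:: z; q; sigma q] by rewrite /= !inE !negb_or zsq qsq eq_sym qz.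
  by rewrite -(line_eq3 EBs B''Bs zqs zE qE sqE zB'' qB'' sqB'').
have zq : z != q by rewrite eq_sym.
have FBs := line_symdiff EBs B''Bs zq zE qE zB'' qB'' xE xB''.
apply: (partners_line FBs); rewrite ?inE ?xE ?xB'' ?yE ?yB'' ?sE ?sB'' ?sqE ?sqB'' //.
have xs : x != sigma p by apply: contraNneq sB => <-.
have ys : y != sigma p by apply: contraNneq sB => <-.
have xsq : x != sigma q by apply: contraNneq xB'' => ->.
have ssq : sigma p != sigma q by apply: contraNneq sB'' => ->.
by rewrite uniq4E xy xs xsq ys ysq ssq.
Qed.

Lemma partners_on_line B q : B \in Bs -> uniq [:: x; y; z; q] ->
  x \in B -> y \in B -> z \in B -> q \in B -> partners x y (sigma z) (sigma q).
Proof.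
move=> BBs xyzq xB yB zB qB; rewrite brk_r (@brk_partner q x) /partners ?eqxx ?orbT //.
apply: (partners_line BBs) => //; move: xyzq; rewrite !uniq4E !(eq_sym _ x).
by case/and5P=> -> -> -> -> /andP[-> ->].
Qed.

Lemma partners_on p q : partners x y p q -> partners x y (sigma p) (sigma q).
Proof.
have [L LBs /and5P[yL zL xL sxL yzxs]] := brk_collinear xy xz x_on.
have xy_line : partners x y (sigma x) z.
  apply: (partners_line LBs) => //; move: yzxs; rewrite !uniq4E.
  by case/and5P=> yz' yx ys zx /andP[zs xs]; rewrite eq_sym yx xs eq_sym zx ys yz' eq_sym zs.
move=> pxy; case/or3P: (pxy) => [/andP[/eqP-> /eqP->]|/andP[/eqP-> /eqP->]|].
- by rewrite brk_l.
- by rewrite brk_l partners_sym.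
case/andP=> xypq /hasP[B BBs /and4P[xB yB pB qB]].
move: (xypq); rewrite uniq4E => /and5P[_ xp xq yp /andP[yq pq]].
have [zB|zB] := boolP (z \in B).
  have : z \in [:: x; y; p; q].
    apply: (mem_subset_card xypq _ _ zB); first by rewrite line_card.
    by move=> t; rewrite !inE => /or4P[]/eqP->.
  rewrite !inE (eq_sym z x) (negbTE xz) (eq_sym z y) (negbTE yz) /=.
  case/orP=> /eqP zE; rewrite -zE in xypq *.
  - exact: (partners_on_line BBs).
  - by rewrite partners_sym; apply: (partners_on_line BBs); rewrite // -uniq4C.
have [yzp|yzp] := boolP (collinear y z p); first exact: (partners_on_moved BBs).
have [yzq|yzq] := boolP (collinear y z q).
  by rewrite partners_sym; apply: (partners_on_moved BBs); rewrite // -uniq4C.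
have [py qy] : p != y /\ q != y by rewrite !(eq_sym _ y).
have [pz qz] : p != z /\ q != z by split; apply: contraNneq zB => <-.
by rewrite !brk_notcollinear.
Qed.

End OnSpan.

End Conjugation.

Theorem lemma4p4 (T : finType) (Bs : seq {set T}) (lam : nat) :
  design_2_4 Bs lam ->
  supersimple Bs ->
  prop_triangle Bs ->
  regular_two_graph (collinear_triples Bs) ->
  forall x y z : T, x != y -> y != z -> x != z ->
    (brk Bs y z * brk Bs x y * brk Bs y z)%g =
    (if x \in span2 Bs y z then brk Bs x y else brk Bs x z).
Proof.
move=> [Bs4 _] Bs_ss Bs_tri Bs_2g x y z xy yz xz.
have line_card B : B \in Bs -> #|B| = 4 by move/(allP Bs4)/eqP.
have sK := brkK line_card Bs_ss yz.
rewrite inE; case: ifP => [x_on|/negbT x_off].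
  by apply: brk_conj => //; apply: partners_on.
apply: brk_conj => //; first exact: partners_off.
have zy : z != y by rewrite eq_sym.
rewrite (brkC line_card Bs_ss yz); apply: partners_off => //.
by rewrite collinearC.
Qed.
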